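(* Let $G$ be the digraph with $V(G)=\{u,v,w\}$ and $E(G)=\{(u,v),(u,w),(w,w)\}$. Then the associative spectrum of $\mathbb{A}(G)$ satisfies $s_n=|R_{n-1}|$ for all $n\ge3$. Hence $s_n=\Theta(\alpha^n)$, where $\alpha\approx1.755$ is the unique positive root of $x^4-x^3-x^2-1$.
   Context: The graph algebra $\mathbb{A}(G)$ is the groupoid on $V\cup\{\infty\}$ with $xy=x$ if $x,y\in V$ and $(x,y)\in E$, and $xy=\infty$ otherwise. $B_n$ is the set of binary terms in which $x_1,\dots,x_n$ each occur once in this order; the associative spectrum $s_n$ is the number of distinct term operations on $\mathbb{A}(G)$ induced by bracketings in $B_n$. For $n\ge2$, $R_n$ is the set of words of length $n$ over $\{0,1\}$ that do not start with $01$, do not end with $10$, and do not contain $101$. $\Theta(\alpha^n)$ means bounded between $c_1\alpha^n$ and $c_2\alpha^n$ for positive constants $c_1,c_2$. *)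

From HB Require Import structures.
From mathcomp Require Import all_boot all_order all_algebra.
From mathcomp Require Import reals.
Set Implicit Arguments. Unset Strict Implicit. Unset Printing Implicit Defensive.
Import Order.TTheory GRing.Theory Num.Theory.

(* A(G) for a digraph G = (V, E), E given as a relation on the finType V.
   Carrier V ∪ {∞} is [option V], with [None] playing the role of ∞. *)
Definition galg (V : finType) := option V.

Definition gmul (V : finType) (E : rel V) (x y : galg V) : galg V :=
  match x, y with
  | Some a, Some b => if E a b then Some a else None
  | _, _ => None
  end.

(* A bracketing of x_1,...,x_n (each once, in order) is a binary tree with
   n leaves; the i-th leaf from the left is x_i. *)
Inductive btree : Type := Leaf | Node of btree & btree.

Fixpoint leaves (t : btree) : nat :=
  match t with Leaf => 1 | Node l r => leaves l + leaves r end.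

(* All binary trees with exactly n leaves (fuel = n suffices). *)
Fixpoint trees_fuel (fuel n : nat) : seq btree :=
  match fuel with
  | 0 => [::]
  | fuel'.+1 =>
      if n == 1 then [:: Leaf]
      else flatten [seq [seq Node l r | l <- trees_fuel fuel' k,
                                        r <- trees_fuel fuel' (n - k)]
                   | k <- iota 1 n.-1]
  end.

Definition B (n : nat) : seq btree := trees_fuel n n.

Fixpoint teval (V : finType) (E : rel V) (t : btree) (s : seq (galg V))
  : galg V :=
  match t with
  | Leaf => head None s
  | Node l r => gmul E (teval E l (take (leaves l) s))
                       (teval E r (drop (leaves l) s))
  end.

Definition termop (V : finType) (E : rel V) (n : nat) (t : btree)
  : {ffun n.-tuple (galg V) -> galg V} :=
  [ffun x : n.-tuple (galg V) => teval E t x].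

Definition spectrum (V : finType) (E : rel V) (n : nat) : nat :=
  size (undup [seq termop E n t | t <- B n]).

(* V = {u, v, w} encoded as 'I_3 with u = 0, v = 1, w = 2;
   E = {(u,v), (u,w), (w,w)}. *)
Definition Gedge : rel 'I_3 := fun a b =>
  [|| (nat_of_ord a == 0) && (nat_of_ord b == 1),
      (nat_of_ord a == 0) && (nat_of_ord b == 2)
    | (nat_of_ord a == 2) && (nat_of_ord b == 2)].

(* 0 = false, 1 = true. *)
Definition Rword (s : seq bool) : bool :=
  [&& ~~ prefix [:: false; true] s,
      ~~ suffix [:: true; false] s
    & ~~ infix [:: true; false; true] s].

Definition Rset (n : nat) : {set n.-tuple bool} :=
  [set w : n.-tuple bool | Rword w].

(* Write a bracketing t of x_1, ..., x_n along its left spine as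
   (...((x_1 r_1) r_2) ...) r_k.  In A(G) the edges leave u towards v and w,
   and w towards w only, so t takes a value other than oo exactly when x_1 is
   a vertex and either n = 1, or all arguments are w, or x_1 = u, every
   one-variable factor r_i is v or w and every other argument is w.  Hence
   the term operation of t is determined by the word that has a 1 for each
   one-variable factor r_i and a block 0^|r_i| for each longer one, and it
   determines that word (evaluate at u followed by v for each 1 and w for
   each 0).  These words are exactly those whose maximal 0-runs have length
   at least 2, i.e. R_(n-1).  A three-state automaton recognising them gives
   |R_(m+4)| = |R_(m+3)| + |R_(m+2)| + |R_m|, whose characteristic polynomial
   is x^4 - x^3 - x^2 - 1, and comparing with alpha^m along the recurrence
   gives alpha^m / 2 <= |R_m| <= alpha^m. *)

From HB Require Import structures.
From mathcomp Require Import all_boot all_order all_algebra.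
From mathcomp Require Import reals.
From mathcomp Require Import zify ring lra.
Import Order.TTheory GRing.Theory Num.Theory.
Set Implicit Arguments. Unset Strict Implicit. Unset Printing Implicit Defensive.

(** * Bracketings and their words *)

Fixpoint eqbtree (t1 t2 : btree) : bool :=
  match t1, t2 with
  | Leaf, Leaf => true
  | Node l1 r1, Node l2 r2 => eqbtree l1 l2 && eqbtree r1 r2
  | _, _ => false
  end.

Lemma eqbtreeP : Equality.axiom eqbtree.
Proof.
elim=> [|l1 IHl r1 IHr] [|l2 r2] /=; try by constructor.
by apply: (iffP andP) => [[/IHl-> /IHr->] | [<- <-]]; split; [apply/IHl | apply/IHr].
Qed.

HB.instance Definition _ := hasDecEq.Build btree eqbtreeP.

Lemma leaves_gt0 t : 0 < leaves t.
Proof. by elim: t => //= l IHl r IHr; rewrite addn_gt0 IHl. Qed.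

Lemma mem_trees_fuel fuel n t :
  n <= fuel -> (t \in trees_fuel fuel n) = (leaves t == n).
Proof.
elim: fuel n t => [|fuel IH] n t.
  by rewrite leqn0 => /eqP->; rewrite eqn0Ngt leaves_gt0.
move=> le_n_fuel /=; case: eqP => [->|n_neq1].
  case: t => [|l r] //=; rewrite inE; apply/eqP/eqP => // sum1.
  by have := leaves_gt0 l; have := leaves_gt0 r; lia.
apply/flatten_mapP/idP => [[k] | /eqP leaves_t].
  rewrite mem_iota => /andP[k_gt0 k_lt] /allpairsP[[l r] /= [l_k r_k ->]] /=.
  rewrite IH in l_k; last lia; rewrite IH in r_k; last lia.
  by move: l_k r_k => /eqP-> /eqP->; rewrite subnKC //; lia.
case: t leaves_t => [|l r] /= leaves_t; first by case: n_neq1.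
have := leaves_gt0 l; have := leaves_gt0 r => r_gt0 l_gt0.
exists (leaves l); first by rewrite mem_iota; lia.
apply/allpairsP; exists (l, r); rewrite /= !IH -?leaves_t ?addKn ?eqxx //; lia.
Qed.

Lemma mem_B n t : (t \in B n) = (leaves t == n).
Proof. exact: mem_trees_fuel. Qed.

Definition block (r : btree) : seq bool :=
  if r is Leaf then [:: true] else nseq (leaves r) false.

Fixpoint tree_word (t : btree) : seq bool :=
  if t is Node l r then tree_word l ++ block r else [::].

Lemma size_block r : size (block r) = leaves r.
Proof. by case: r => //= l r; rewrite size_nseq. Qed.

Lemma size_tree_word t : size (tree_word t) = (leaves t).-1.
Proof.
elim: t => //= l IHl r _; rewrite size_cat IHl size_block.
by have := leaves_gt0 l; case: (leaves l).
Qed.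

(** * Term operations of A(G) *)

Definition vu : 'I_3 := @Ordinal 3 0 isT.
Definition vv : 'I_3 := @Ordinal 3 1 isT.
Definition vw : 'I_3 := @Ordinal 3 2 isT.

Variant vertex_spec : 'I_3 -> Type :=
  | VertexU : vertex_spec vu
  | VertexV : vertex_spec vv
  | VertexW : vertex_spec vw.

Lemma vertexP a : vertex_spec a.
Proof.
by case: a => -[|[|[|//]]] lt_a3; rewrite (bool_irrelevance lt_a3 isT); constructor.
Qed.

Lemma gmul_vu z :
  gmul Gedge (Some vu) z = if z \in [:: Some vv; Some vw] then Some vu else None.
Proof. by case: z => [b|] //; case: (vertexP b). Qed.

Lemma gmul_vv z : gmul Gedge (Some vv) z = None.
Proof. by case: z => [b|] //; case: (vertexP b). Qed.

Lemma gmul_vw z :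
  gmul Gedge (Some vw) z = if z == Some vw then Some vw else None.
Proof. by case: z => [b|] //; case: (vertexP b). Qed.

Definition u_slot (b : bool) (x : galg 'I_3) : bool :=
  (x == Some vw) || b && (x == Some vv).

Definition word_op (bs : seq bool) (xs : seq (galg 'I_3)) : galg 'I_3 :=
  match xs with
  | Some a :: ys =>
      if a == vu then (if all2 u_slot bs ys then Some a else None)
      else if a == vv then (if ys is [::] then Some a else None)
      else if all (pred1 (Some vw)) ys then Some a else None
  | _ => None
  end.

Lemma word_op_vu bs ys :
  word_op bs (Some vu :: ys) = if all2 u_slot bs ys then Some vu else None.
Proof. by []. Qed.

Lemma word_op_vv bs ys :
  word_op bs (Some vv :: ys) = if ys is [::] then Some vv else None.
Proof. by []. Qed.

Lemma word_op_vw bs ys :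
  word_op bs (Some vw :: ys) = if all (pred1 (Some vw)) ys then Some vw else None.
Proof. by []. Qed.

Lemma word_op_leaf x : word_op [::] [:: x] = x.
Proof. by case: x => [a|] //; case: (vertexP a). Qed.

Lemma word_op_eq_vv bs y ys :
  (word_op bs (y :: ys) == Some vv) = (y == Some vv) && nilp ys.
Proof. by case: y => [a|] //; case: (vertexP a) => /=; try case: ifP; case: ys. Qed.

Lemma word_op_eq_vw bs y ys :
  (word_op bs (y :: ys) == Some vw) = (y == Some vw) && all (pred1 (Some vw)) ys.
Proof. by case: y => [a|] //; case: (vertexP a) => /=; try case: ifP; case: ys. Qed.

Lemma all2_cat (S T : Type) (r : S -> T -> bool) s1 s2 t1 t2 :
  size s1 = size t1 -> all2 r (s1 ++ s2) (t1 ++ t2) = all2 r s1 t1 && all2 r s2 t2.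
Proof. by elim: s1 t1 => [|x s1 IH] [|y t1] //= [/IH->]; rewrite andbA. Qed.

Lemma all2_u_slot_zeros xs :
  all2 u_slot (nseq (size xs) false) xs = all (pred1 (Some vw)) xs.
Proof. by elim: xs => //= x xs ->; rewrite /u_slot orbF. Qed.

Lemma word_op_block r y ys : size ys = (leaves r).-1 ->
  (word_op (tree_word r) (y :: ys) \in [:: Some vv; Some vw])
  = all2 u_slot (block r) (y :: ys).
Proof.
rewrite !inE word_op_eq_vv word_op_eq_vw.
case: r => [|r1 r2] /= size_ys.
  by case: ys size_ys => //= _; rewrite /u_slot /nilp /= !andbT orbC.
have r_gt1 : 1 < leaves r1 + leaves r2.
  by have := leaves_gt0 r1; have := leaves_gt0 r2; lia.
have -> : leaves r1 + leaves r2 = size (y :: ys) by rewrite /= size_ys; lia.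
rewrite all2_u_slot_zeros /=.
case: ys size_ys => [|? ?] size_ys; last by rewrite /nilp /= andbF.
by exfalso; move: size_ys => /=; lia.
Qed.

Lemma word_op_cat bs r x xs y ys :
  size xs = size bs -> size ys = (leaves r).-1 ->
  gmul Gedge (word_op bs (x :: xs)) (word_op (tree_word r) (y :: ys))
  = word_op (bs ++ block r) (x :: xs ++ y :: ys).
Proof.
move=> size_xs size_ys; case: x => [a|] //; case: (vertexP a).
- rewrite !word_op_vu all2_cat //; case: (all2 u_slot bs xs) => //.
  by rewrite gmul_vu word_op_block.
- by rewrite !word_op_vv; case: xs {size_xs} => [|x xs]; rewrite ?gmul_vv.
- rewrite !word_op_vw all_cat /=; case: (all _ xs) => //.
  by rewrite gmul_vw word_op_eq_vw.
Qed.

Lemma teval_tree_word t s :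
  size s = leaves t -> teval Gedge t s = word_op (tree_word t) s.
Proof.
elim: t s => [|l IHl r IHr] s /= size_s.
  by case: s size_s => [|x []] // _; rewrite word_op_leaf.
have size_take : size (take (leaves l) s) = leaves l.
  by rewrite size_takel // size_s leq_addr.
have size_drop : size (drop (leaves l) s) = leaves r.
  by rewrite size_drop size_s addKn.
rewrite IHl // IHr // -{3}(cat_take_drop (leaves l) s).
move: size_take size_drop.
case: (take _ s) => [|x xs] size_take; first by have := leaves_gt0 l; rewrite -size_take.
case: (drop _ s) => [|y ys] size_drop; first by have := leaves_gt0 r; rewrite -size_drop.
by rewrite word_op_cat // ?size_tree_word -?size_take -?size_drop.
Qed.

Definition word_fun n (bs : seq bool) : {ffun n.-tuple (galg 'I_3) -> galg 'I_3} :=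
  [ffun x : n.-tuple (galg 'I_3) => word_op bs x].

Lemma termop_tree_word n t :
  leaves t = n -> termop Gedge n t = word_fun n (tree_word t).
Proof.
by move=> leaves_t; apply/ffunP => x; rewrite !ffunE teval_tree_word // size_tuple.
Qed.

Definition word_input (bs : seq bool) : seq (galg 'I_3) :=
  Some vu :: [seq Some (if b then vv else vw) | b <- bs].

Lemma word_op_input bs bs' :
  word_op bs' (word_input bs) = if all2 implb bs bs' then Some vu else None.
Proof.
rewrite word_op_vu; congr (if _ then _ else _).
by elim: bs bs' => [|b bs IH] [|b' bs'] //=; rewrite IH; case: b; case: b'.
Qed.

Lemma all2_implb_refl bs : all2 implb bs bs.
Proof. by elim: bs => //= b bs ->; case: b. Qed.

Lemma all2_implb_anti bs bs' : all2 implb bs bs' -> all2 implb bs' bs -> bs = bs'.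
Proof.
elim: bs bs' => [|b bs IH] [|b' bs'] //=.
by case: b; case: b' => //= /IH le1 /le1 ->.
Qed.

Lemma word_fun_inj n bs bs' : size bs = n -> size bs' = n ->
  word_fun n.+1 bs = word_fun n.+1 bs' -> bs = bs'.
Proof.
move=> size_bs size_bs' /ffunP eq_fun.
have at_input c : size c = n -> word_op bs (word_input c) = word_op bs' (word_input c).
  move=> size_c; have size_input : size (word_input c) == n.+1.
    by rewrite /= size_map size_c.
  by have := eq_fun (Tuple size_input); rewrite !ffunE.
have := at_input bs size_bs; rewrite !word_op_input all2_implb_refl.
case: ifP => // le_bs_bs' _.
have := at_input bs' size_bs'; rewrite !word_op_input all2_implb_refl.
by case: ifP => // le_bs'_bs _; apply: all2_implb_anti.
Qed.

Lemma undup_map_inj_in (T1 T2 : eqType) (f : T1 -> T2) (s : seq T1) :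
  {in s &, injective f} -> undup (map f s) = map f (undup s).
Proof.
elim: s => //= x s IH f_inj.
have f_inj_s : {in s &, injective f}.
  by move=> a b a_s b_s; apply: f_inj; rewrite inE ?a_s ?b_s orbT.
have -> : (f x \in map f s) = (x \in s).
  apply/mapP/idP => [[y y_s fx_fy] | x_s]; last by exists x.
  by rewrite (f_inj x y) // ?inE ?eqxx ?y_s ?orbT.
by case: (x \in s); rewrite /= IH.
Qed.

Lemma card_tuple_set (T : finType) m (P : pred (seq T)) (s : seq (seq T)) :
  uniq s -> (forall x, (x \in s) = (size x == m) && P x) ->
  #|[set w : m.-tuple T | P w]| = size s.
Proof.
move=> s_uniq mem_s; rewrite cardE -(size_map val).
apply/perm_size/uniq_perm; rewrite ?(map_inj_uniq val_inj) ?enum_uniq // => x.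
rewrite mem_s; apply/mapP/idP => [[w] | /andP[/eqP size_x Px]].
  by rewrite mem_enum inE => Pw ->; rewrite Pw size_tuple eqxx.
have size_x' : size x == m by rewrite size_x.
by exists (Tuple size_x'); rewrite ?mem_enum ?inE.
Qed.

(** * Words with no isolated zero *)

(* [Free]: at the start or after a 1; [OneZero]: after a 0-run of length 1;
   [ZeroRun]: after a 0-run of length at least 2. *)
Inductive state := Free | OneZero | ZeroRun | Dead.

Definition step (st : state) (b : bool) : state :=
  match st, b with
  | Free, true | ZeroRun, true => Free
  | Free, false => OneZero
  | OneZero, false | ZeroRun, false => ZeroRun
  | _, _ => Dead
  end.

Definition accepting (st : state) : bool :=
  match st with Free | ZeroRun => true | OneZero | Dead => false end.

Definition accepts (st : state) (s : seq bool) : bool := accepting (foldl step st s).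

Lemma accepts_cons st b s : accepts st (b :: s) = accepts (step st b) s.
Proof. by []. Qed.

Lemma accepts_Dead s : accepts Dead s = false.
Proof. by elim: s. Qed.

Lemma suffix_consE (T : eqType) (s1 s2 : seq T) x :
  suffix s1 (x :: s2) = (s1 == x :: s2) || suffix s1 s2.
Proof.
apply/suffixP/orP => [[[|y s] /= eq_s] | [/eqP-> | /suffixP[s ->]]].
- by left; rewrite eq_s.
- by case: eq_s => _ ->; right; apply: suffix_suffix.
- by exists [::].
- by exists (x :: s).
Qed.

Lemma accepts_FreeE_ZeroRunE s :
  accepts Free s = Rword s && (s != [:: false]) /\
  accepts ZeroRun s = ~~ infix [:: true; false; true] s && ~~ suffix [:: true; false] s.
Proof.
have [n] := ubnP (size s); elim: n s => // n IH [|b s] //= /ltnSE size_s.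
have [IH_Free IH_Run] := IH s size_s.
rewrite /Rword !accepts_cons !infix_consl !suffix_consE !eqseq_cons /=.
case: b; first by rewrite IH_Free /Rword [s == _]eq_sym;
  split; case: (prefix _ s); case: (infix _ s); case: (suffix _ s); case: (_ == s).
split; last by rewrite IH_Run.
case: s size_s {IH_Free IH_Run} => [|[] s] //= /ltnW size_s.
  by rewrite accepts_cons accepts_Dead prefix0s.
have [_ IH_Run] := IH s size_s.
by rewrite accepts_cons IH_Run suffix_consE andbT andbC.
Qed.

Lemma foldl_step_zeros k : foldl step ZeroRun (nseq k false) = ZeroRun.
Proof. by elim: k. Qed.

Lemma foldl_step_tree_word t :
  foldl step Free (tree_word t) = if t is Node _ (Node _ _) then ZeroRun else Free.
Proof.
elim: t => //= l IHl r _; rewrite foldl_cat IHl.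
case: r => [|r1 r2] /=; first by case: l {IHl} => [|? []].
have [k ->] : exists k, leaves r1 + leaves r2 = k.+2.
  exists (leaves r1 + leaves r2 - 2).
  by have := leaves_gt0 r1; have := leaves_gt0 r2; lia.
by case: l {IHl} => [|? []] /=; rewrite foldl_step_zeros.
Qed.

Lemma accepts_tree_word t : accepts Free (tree_word t).
Proof. by rewrite /accepts foldl_step_tree_word; case: t => [|? []]. Qed.

Lemma tree_word_onto s : accepts Free s -> exists t, tree_word t = s.
Proof.
suff extend t : accepts (foldl step Free (tree_word t)) s ->
    exists t', tree_word t' = tree_word t ++ s.
  by move/(extend Leaf).
have [n] := ubnP (size s); elim: n s t => // n IH [|b s] t.
  by exists t; rewrite cats0.
case: b => /ltnSE size_s acc_s.
  have [|t' tw_t'] := IH s (Node t Leaf) size_s; last by exists t'; rewrite tw_t' -catA.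
  move: acc_s; rewrite !foldl_step_tree_word accepts_cons.
  by case: t => [|? []].
move: acc_s; have [[l [r1 [r2 ->]]] | t_free] :
    (exists l r1 r2, t = Node l (Node r1 r2)) \/ foldl step Free (tree_word t) = Free.
- rewrite foldl_step_tree_word.
  by case: t => [|l [|r1 r2]]; [right|right|left; exists l, r1, r2].
- rewrite foldl_step_tree_word accepts_cons => acc_s.
  have [|t' tw_t'] := IH s (Node l (Node (Node r1 r2) Leaf)) size_s.
    by rewrite foldl_step_tree_word.
  by exists t'; rewrite tw_t' /= nseqD -!catA.
- rewrite t_free accepts_cons.
  case: s size_s => [|[] s] //= /ltnW size_s;
    rewrite accepts_cons ?accepts_Dead // => acc_s.
  have [|t' tw_t'] := IH s (Node t (Node Leaf Leaf)) size_s.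
    by rewrite foldl_step_tree_word.
  by exists t'; rewrite tw_t' -catA.
Qed.

(* The size condition excludes [:: false], which is in R_1 but not accepted. *)
Lemma accepts_Free_Rword s : 1 < size s -> accepts Free s = Rword s.
Proof.
have [-> _] := accepts_FreeE_ZeroRunE s => size_s.
suff -> : s != [:: false] by rewrite andbT.
by apply: contraTneq size_s => ->.
Qed.

Lemma mem_tree_words n x : 1 < n ->
  (x \in map tree_word (B n.+1)) = (size x == n) && Rword x.
Proof.
move=> n_gt1; apply/mapP/andP => [[t] | [/eqP size_x Rx]].
  rewrite mem_B => /eqP leaves_t ->; rewrite size_tree_word leaves_t.
  by rewrite -accepts_Free_Rword ?accepts_tree_word ?size_tree_word ?leaves_t.
rewrite -accepts_Free_Rword ?size_x // in Rx; have [t tw_t] := tree_word_onto Rx.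
by exists t; rewrite // mem_B -(prednK (leaves_gt0 t)) -size_tree_word tw_t size_x.
Qed.

Lemma spectrum_Gedge n : 2 < n -> spectrum Gedge n = #|Rset n.-1|.
Proof.
case: n => // n n_gt2; rewrite /spectrum.
have -> : [seq termop Gedge n.+1 t | t <- B n.+1] =
    map (word_fun n.+1) (map tree_word (B n.+1)).
  by rewrite -map_comp; apply/eq_in_map => t; rewrite mem_B => /eqP /termop_tree_word.
rewrite undup_map_inj_in ?size_map; last first.
  move=> x y; rewrite !mem_tree_words // => /andP[/eqP size_x _] /andP[/eqP size_y _].
  exact: word_fun_inj.
rewrite /Rset (@card_tuple_set _ _ _ (undup (map tree_word (B n.+1)))) ?undup_uniq //.
by move=> x; rewrite mem_undup mem_tree_words.
Qed.

(** * Counting and growth *)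

Lemma mem_map_cons (T : eqType) (b c : T) x s :
  (c :: x \in map (cons b) s) = (c == b) && (x \in s).
Proof. by apply/mapP/andP => [[y y_s [-> ->]] | [/eqP-> x_s]]; last exists x. Qed.

Fixpoint words m : seq (seq bool) :=
  if m is m'.+1 then map (cons true) (words m') ++ map (cons false) (words m')
  else [:: [::]].

Lemma mem_words m x : (x \in words m) = (size x == m).
Proof.
elim: m x => [|m IH] [|b x] //=; rewrite mem_cat.
  by apply/negbTE/norP; split; apply/mapP => -[].
by rewrite !mem_map_cons eqSS IH; case: b => /=; rewrite ?orbF.
Qed.

Lemma words_uniq m : uniq (words m).
Proof.
elim: m => //= m IH; rewrite cat_uniq !map_inj_uniq ?IH /= ?andbT; try by move=> x y [].
by apply/hasPn => _ /mapP[x _ ->]; rewrite mem_map_cons.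
Qed.

Definition naccepts st m : nat := count (accepts st) (words m).

Lemma nacceptsS st m :
  naccepts st m.+1 = naccepts (step st true) m + naccepts (step st false) m.
Proof. by rewrite /naccepts /= count_cat !count_map. Qed.

Lemma naccepts_Dead m : naccepts Dead m = 0.
Proof. by rewrite /naccepts (eq_count accepts_Dead) count_pred0. Qed.

Lemma card_Rset m : 1 < m -> #|Rset m| = naccepts Free m.
Proof.
move=> m_gt1; rewrite /Rset (@card_tuple_set _ _ _ (filter Rword (words m))).
- rewrite size_filter; apply: eq_in_count => x; rewrite mem_words => /eqP size_x.
  by rewrite accepts_Free_Rword ?size_x.
- by rewrite filter_uniq ?words_uniq.
- by move=> x; rewrite mem_filter mem_words andbC.
Qed.

Lemma naccepts_rec m : naccepts Free (m + 4) =
  naccepts Free (m + 3) + naccepts Free (m + 2) + naccepts Free m.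
Proof.
have Free_S k : naccepts Free k.+1 = naccepts Free k + naccepts OneZero k.
  by rewrite nacceptsS.
have OneZero_S k : naccepts OneZero k.+1 = naccepts ZeroRun k.
  by rewrite nacceptsS naccepts_Dead.
have ZeroRun_S k : naccepts ZeroRun k.+1 = naccepts Free k + naccepts ZeroRun k.
  by rewrite nacceptsS.
rewrite !addnS !addn0.
have := Free_S m.+3; have := Free_S m.+2; have := Free_S m.+1; have := Free_S m.
have := OneZero_S m.+2; have := OneZero_S m.+1; have := OneZero_S m.
have := ZeroRun_S m.+1; have := ZeroRun_S m.
lia.
Qed.

Local Open Scope ring_scope.

Definition quartic (R : numDomainType) (x : R) : R := x ^+ 4 - x ^+ 3 - x ^+ 2 - 1.

Lemma quartic_lt0 (R : realFieldType) (y : R) : 0 <= y <= 3 / 2 -> quartic y < 0.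
Proof.
move=> /andP[y_ge0 y_le]; rewrite /quartic.
have y2 : y ^+ 2 - y - 1 < 0 by rewrite expr2; nra.
have -> : y ^+ 4 - y ^+ 3 - y ^+ 2 - 1 = y ^+ 2 * (y ^+ 2 - y - 1) - 1 by ring.
by have := sqr_ge0 y; nra.
Qed.

Lemma quartic_lt (R : realFieldType) (x y : R) :
  3 / 2 <= x -> x < y -> quartic x < quartic y.
Proof.
move=> x_ge x_lt_y; rewrite /quartic -subr_gt0.
have -> : y ^+ 4 - y ^+ 3 - y ^+ 2 - 1 - (x ^+ 4 - x ^+ 3 - x ^+ 2 - 1) =
  (y - x) * ((y ^+ 3 + y ^+ 2 * x + y * x ^+ 2 + x ^+ 3)
             - (y ^+ 2 + y * x + x ^+ 2) - (y + x)) by ring.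
apply: mulr_gt0; first by rewrite subr_gt0.
(* The second factor is (y^3 - y^2 - y) + (x^3 - x^2 - x) + y x (y + x - 1). *)
have cube (z : R) : 3 / 2 <= z -> - 1 <= z ^+ 3 - z ^+ 2 - z.
  by move=> z_ge; rewrite !exprS expr0 !mulr1; nra.
have mixed : 9 / 2 <= y * x * (y + x - 1) by nra.
have := cube x x_ge; have := cube y (le_trans x_ge (ltW x_lt_y)).
by rewrite !exprS expr0 !mulr1; nra.
Qed.

Lemma quartic_pos_root_uniq (R : realFieldType) (x y : R) :
  0 < x -> 0 < y -> quartic x = 0 -> quartic y = 0 -> x = y.
Proof.
have root_gt (z : R) : 0 < z -> quartic z = 0 -> 3 / 2 < z.
  move=> z_gt0 root_z; rewrite ltNge; apply/negP => z_le.
  by have := @quartic_lt0 R z; rewrite root_z ltxx (ltW z_gt0) z_le => /(_ isT).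
move=> x_gt0 y_gt0 root_x root_y.
have x_gt := root_gt x x_gt0 root_x; have y_gt := root_gt y y_gt0 root_y.
case: (ltgtP x y) => // [x_lt_y | y_lt_x].
- by have := quartic_lt (ltW x_gt) x_lt_y; rewrite root_x root_y ltxx.
- by have := quartic_lt (ltW y_gt) y_lt_x; rewrite root_x root_y ltxx.
Qed.

Lemma quartic_root (R : realType) :
  exists2 a : R, quartic a = 0 & 175 / 100 < a < 176 / 100.
Proof.
pose p : {poly R} := 'X^4 - 'X^3 - 'X^2 - 1.
have pE x : p.[x] = quartic x by rewrite /p !hornerE.
have lo : quartic (175 / 100 : R) < 0 by rewrite /quartic; lra.
have hi : 0 < quartic (176 / 100 : R) by rewrite /quartic; lra.
have [||a /andP[a_ge a_le] /rootP] := @poly_ivt R p (175 / 100) (176 / 100).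
- lra.
- by rewrite !pE (ltW lo) (ltW hi).
rewrite pE => root_a; exists a => //; apply/andP; split.
- rewrite lt_neqAle a_ge andbT; apply/eqP => a_eq.
  by move: lo; rewrite a_eq root_a ltxx.
- rewrite lt_neqAle a_le andbT; apply/eqP => a_eq.
  by move: hi; rewrite -a_eq root_a ltxx.
Qed.

Lemma recurrence_ge0 (R : numDomainType) (g : nat -> R) :
  (forall m, g (m + 4)%N = g (m + 3)%N + g (m + 2)%N + g m) ->
  (forall m, (m < 4)%N -> 0 <= g m) -> forall m, 0 <= g m.
Proof.
move=> g_rec g_init m; elim/ltn_ind: m => m IH.
have [/g_init // | m_ge4] := ltnP m 4.
by rewrite -(subnK m_ge4) g_rec !addr_ge0 ?IH //; lia.
Qed.

Lemma naccepts_bounds (R : realFieldType) (a : R) :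
  8 / 5 <= a <= 2 -> quartic a = 0 ->
  forall m, a ^+ m / 2 <= (naccepts Free m)%:R <= a ^+ m.
Proof.
move=> /andP[a_ge a_le] root_a m.
have pow_rec k : a ^+ (k + 4) = a ^+ (k + 3) + a ^+ (k + 2) + a ^+ k.
  have a4 : a ^+ 4 = a ^+ 3 + a ^+ 2 + 1 by move: root_a; rewrite /quartic; lra.
  by rewrite !exprD a4; ring.
have count_rec k : (naccepts Free (k + 4))%:R =
    (naccepts Free (k + 3))%:R + (naccepts Free (k + 2))%:R + (naccepts Free k)%:R :> R.
  by rewrite naccepts_rec !natrD.
have init k : (k < 4)%N -> a ^+ k / 2 <= (naccepts Free k)%:R <= a ^+ k.
  have [a2_ge a2_le] : 2 <= a ^+ 2 /\ a ^+ 2 <= 4 by rewrite expr2; split; nra.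
  have [a3_ge a3_le] : 4 <= a ^+ 3 /\ a ^+ 3 <= 8.
    by rewrite !exprS expr0 mulr1; split; nra.
  have [n0 n1 n2 n3] : [/\ naccepts Free 0 = 1, naccepts Free 1 = 1,
    naccepts Free 2 = 2 & naccepts Free 3 = 4]%N by [].
  case: k => [|[|[|[|//]]]] _; rewrite ?n0 ?n1 ?n2 ?n3 ?expr0 ?expr1;
    apply/andP; split; lra.
have lower := @recurrence_ge0 R (fun k => (naccepts Free k)%:R - a ^+ k / 2).
have upper := @recurrence_ge0 R (fun k => a ^+ k - (naccepts Free k)%:R).
apply/andP; split; rewrite -subr_ge0; [apply: lower | apply: upper] => k.
- by rewrite pow_rec count_rec; ring.
- by rewrite subr_ge0 => /init/andP[].
- by rewrite pow_rec count_rec; ring.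
- by rewrite subr_ge0 => /init/andP[].
Qed.

Theorem proposition8p3 (R : realType) :
  (forall n : nat, (3 <= n)%N -> spectrum Gedge n = #|Rset n.-1|)
  /\
  exists alpha : R,
    [/\ 0 < alpha,
        alpha ^+ 4 - alpha ^+ 3 - alpha ^+ 2 - 1 = 0,
        (forall y : R, 0 < y -> y ^+ 4 - y ^+ 3 - y ^+ 2 - 1 = 0 -> y = alpha),
        175 / 100 < alpha < 176 / 100
      & exists c1 c2 : R, [/\ 0 < c1, 0 < c2 &
          exists N : nat, forall n : nat, (N <= n)%N ->
            c1 * alpha ^+ n <= (spectrum Gedge n)%:R <= c2 * alpha ^+ n]].
Proof.
split; first exact: spectrum_Gedge.
have [a root_a /andP[a_lo a_hi]] := quartic_root R.
have a_gt0 : 0 < a by lra.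
exists a; split => //.
- by move=> y y_gt0 root_y; apply: quartic_pos_root_uniq.
- by rewrite a_lo a_hi.
exists (1 / 4), 1; split; [lra | lra | exists 3%N => n n_ge3].
have a_bounds : 8 / 5 <= a <= 2 by apply/andP; split; lra.
have /andP[lo hi] := naccepts_bounds a_bounds root_a n.-1.
have a_pow : a ^+ n = a * a ^+ n.-1 by rewrite -exprS prednK //; lia.
have pow_ge0 := exprn_ge0 n.-1 (ltW a_gt0).
rewrite spectrum_Gedge // card_Rset; last by lia.
by rewrite a_pow; apply/andP; split; nra.
Qed.
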